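(* Let $G=(V,E)$ be a graph with arboricity $a$ and unique node identifiers. Consider the following procedure, run in phases $i=1,2,\dots$. At the beginning of phase $i$, let $d_i(u)$ be the number of edges incident to $u$ not yet assigned a direction, and let $\overline{d_i}=\sum_{u\in V}d_i(u)/|\{u\in V\mid d_i(u)>0\}|$. In phase $i$, node $u$ is inactive if $d_i(u)=0$, active if $0<d_i(u)\le 2\overline{d_i}$, and waiting if $d_i(u)>2\overline{d_i}$; each undirected edge $\{u,v\}$ is directed from $u$ to $v$ if $u$ is active and $v$ is waiting, or if both are active and $\mathrm{id}(u)<\mathrm{id}(v)$. Then after $O(\log n)$ phases all edges are directed, and the resulting orientation is an $O(a)$-orientation.
   Context: $n=|V|$. The arboricity of $G$ is the minimum number of forests into which its edge set can be partitioned. An orientation assigns each edge a direction; a $k$-orientation is one in which every node has at most $k$ outgoing edges. *)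

From mathcomp Require Import all_boot all_order all_algebra.
Set Implicit Arguments. Unset Strict Implicit. Unset Printing Implicit Defensive.
Import Order.TTheory GRing.Theory Num.Theory.

(* Graphs: V : finType, e : rel V symmetric and irreflexive (simple graph). *)

Definition is_cycle (V : finType) (r : rel V) (c : seq V) : bool :=
  [&& 3 <= size c, uniq c & cycle r c].

Definition acyclic (V : finType) (r : rel V) : Prop :=
  forall c : seq V, ~~ is_cycle r c.

Definition forest_partition (V : finType) (e : rel V) (k : nat) : Prop :=
  exists col : V -> V -> nat,
    (forall u v, col u v = col v u) /\
    (forall u v, e u v -> col u v < k) /\
    (forall c, c < k -> acyclic (fun x y => e x y && (col x y == c))).

Definition is_arboricity (V : finType) (e : rel V) (a : nat) : Prop :=
  forest_partition e a /\ (forall k, forest_partition e k -> a <= k).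

(* The procedure.  A state is the set D of directed edges (u,v) meaning u -> v. *)
Section Procedure.
Variables (V : finType) (e : rel V) (id : V -> nat).

Definition undirected (D : {set V * V}) (u v : V) : bool :=
  [&& e u v, (u, v) \notin D & (v, u) \notin D].

Definition rdeg (D : {set V * V}) (u : V) : nat := #|[set v | undirected D u v]|.

Definition avg_deg (D : {set V * V}) : rat :=
  (((\sum_(u : V) rdeg D u)%N)%:R / (#|[set u | (0 < rdeg D u)%N]|)%:R)%R.

Definition is_active (D : {set V * V}) (u : V) : bool :=
  (0 < rdeg D u)%N && (((rdeg D u)%:R : rat) <= 2 * avg_deg D)%R.

Definition is_waiting (D : {set V * V}) (u : V) : bool :=
  (2 * avg_deg D < ((rdeg D u)%:R : rat))%R.

Definition phase (D : {set V * V}) : {set V * V} :=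
  D :|: [set p : V * V | undirected D p.1 p.2 &&
          ((is_active D p.1 && is_waiting D p.2) ||
           [&& is_active D p.1, is_active D p.2 & id p.1 < id p.2])].

Definition after (i : nat) : {set V * V} := iter i phase set0.

End Procedure.

From mathcomp Require Import all_boot all_order all_algebra.
From mathcomp Require Import zify.
Set Implicit Arguments. Unset Strict Implicit. Unset Printing Implicit Defensive.
Import Order.TTheory GRing.Theory Num.Theory.

(* Each of the a forests of a decomposition has fewer edges than vertices, so
   the undirected edges left at any time, all incident to the unsettled nodes
   (those with undirected edges left), number at most a times as many as those
   nodes: the residual average degree is at most 2a and an active node has at
   most 4a undirected edges.  A phase directs every edge at an active node, and
   a node gains out-arcs only while active, so it gains them in one phase only
   and ends with out-degree at most 4a.  By Markov's inequality at most half of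
   the unsettled nodes are waiting, and only waiting nodes stay unsettled, so
   after trunc_log 2 n + 1 phases every edge is directed. *)

Definition arcs (V : finType) (r : rel V) : {set V * V} := [set p | r p.1 p.2].

Lemma acyclic_subrel (V : finType) (r r' : rel V) :
  subrel r r' -> acyclic r' -> acyclic r.
Proof.
move=> rr' acy' c; apply: contra (acy' c) => /and3P [c3 uc rc].
by rewrite /is_cycle c3 uc (sub_cycle rr' rc).
Qed.

Section Forest.
Variables (V : finType) (F : rel V) (S : {set V}).
Hypotheses (Fsym : symmetric F) (Firr : irreflexive F) (Facy : acyclic F).
Hypothesis F_S : forall x y, F x y -> x \in S.

Lemma path_back_edge x q z w : uniq (x :: rcons q z) -> path F x (rcons q z) ->
  F z w -> w \in x :: q -> w = last x q.
Proof.
move=> u_xqz p_xqz Fzw w_xq; move: u_xqz p_xqz.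
case/splitPl: w_xq => q1 q2 last_q1.
rewrite rcons_cat -cat_cons cat_uniq cat_path rcons_path.
rewrite last_cat last_q1 => /and3P [_ /hasPn w_q2 u_q2] /and3P [_ p_q2 Fz].
apply/eqP/negPn/negP => w_last.
have w_notin : w \notin rcons q2 z by apply/negP => /w_q2; rewrite -last_q1 mem_last.
apply: (negP (Facy (w :: rcons q2 z))); rewrite /is_cycle /= w_notin u_q2.
rewrite !rcons_path last_rcons p_q2 Fz Fzw size_rcons !andbT.
by case: q2 {w_q2 u_q2 p_q2 Fz w_notin} w_last => [|? ?]; rewrite ?eqxx.
Qed.

Lemma leaf_from_path k x p : #|V| <= k + size p -> x \in S ->
  uniq (x :: p) -> path F x p -> exists2 y, y \in S & #|[set w | F y w]| <= 1.
Proof.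
(* Extend the path while its end has a neighbour off it; [k] bounds the number
   of extensions.  The end of a maximal path is a leaf by [path_back_edge]. *)
have size_uniq (s : seq V) : uniq s -> size s <= #|V|.
  by move=> u_s; rewrite -(card_uniqP u_s) max_card.
elim: k p => [|k IH] p size_p xS u_xp p_xp.
  by move: size_p; rewrite leqNgt (size_uniq _ u_xp).
have [/existsP [w /andP [Fyw w_new]] | no_new] :=
  boolP [exists w, F (last x p) w && (w \notin x :: p)].
  have u_xpw : uniq (x :: rcons p w) by rewrite -rcons_cons rcons_uniq w_new.
  apply: (IH (rcons p w)) => //; last by rewrite rcons_path p_xp.
  by rewrite size_rcons addnS.
have nbrs_old w : F (last x p) w -> w \in x :: p.
  by move=> Fyw; apply: contraNT no_new => w_new; apply/existsP; exists w; rewrite Fyw.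
case/lastP: p size_p u_xp p_xp nbrs_old {no_new} => [|q z] _ u_xp p_xp nbrs_old.
  exists x => //; suff -> : [set w | F x w] = set0 by rewrite cards0.
  apply/setP => w; rewrite !inE; apply/negP => Fxw.
  by have := nbrs_old w Fxw; rewrite inE => /eqP wx; rewrite wx Firr in Fxw.
exists z.
  by move: p_xp; rewrite rcons_path Fsym => /andP [_ /F_S].
rewrite -(cards1 (last x q)); apply/subset_leq_card/subsetP => w; rewrite !inE => Fzw.
apply/eqP/(path_back_edge u_xp p_xp Fzw).
move: (nbrs_old w); rewrite last_rcons -rcons_cons mem_rcons inE => /(_ Fzw).
by case/orP => [/eqP wz | //]; rewrite wz Firr in Fzw.
Qed.

End Forest.

Lemma card_arcs_forest (V : finType) (F : rel V) (S : {set V}) :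
  symmetric F -> irreflexive F -> acyclic F -> (forall x y, F x y -> x \in S) ->
  #|arcs F| <= 2 * #|S|.
Proof.
have [n] := ubnP #|S|; elim: n F S => // n IH F S lt_S_n Fsym Firr Facy F_S.
have [S0 | [x xS]] := set_0Vmem S.
  suff -> : arcs F = set0 by rewrite cards0.
  by apply/setP => -[u v]; rewrite !inE; apply/negP => /F_S; rewrite S0 inE.
have [y yS deg_y] := @leaf_from_path V F S Fsym Firr Facy F_S #|V| x [::]
  (leq_addr _ _) xS isT isT.
(* Deleting the leaf [y] loses one vertex of [S] and at most two arcs. *)
pose F' := [rel u v | [&& F u v, u != y & v != y]].
set N := [set w | F y w] in deg_y.
have F'_S u v : F' u v -> u \in S :\ y by case/and3P => /F_S uS uy _; rewrite !inE uy.
have F'sym : symmetric F' by move=> u v /=; rewrite Fsym [(u != y) && _]andbC.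
have F'irr : irreflexive F' by move=> u /=; rewrite Firr.
have F'acy : acyclic F' by apply: acyclic_subrel Facy => u v /andP [].
have lt_Sy : #|S :\ y| < n by move: lt_S_n; rewrite (cardsD1 y S) yS.
have IH' := IH F' (S :\ y) lt_Sy F'sym F'irr F'acy F'_S.
have arcs_split : arcs F \subset arcs F' :|: (setX [set y] N :|: setX N [set y]).
  apply/subsetP => -[u v]; rewrite !inE /= => Fuv.
  case: (eqVneq u y) Fuv => [-> | uy] Fuv; first by rewrite Fuv orbT.
  by case: (eqVneq v y) Fuv => [-> | vy] Fuv; rewrite ?[F y u]Fsym Fuv ?orbT.
have card_split : #|arcs F| <= #|arcs F'| + 2 * #|N|.
  apply: leq_trans (subset_leq_card arcs_split) _.
  apply: leq_trans (leq_of_leqif (leq_card_setU _ _)) _; rewrite leq_add2l.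
  apply: leq_trans (leq_of_leqif (leq_card_setU _ _)) _.
  by rewrite !cardsX cards1 mul1n muln1 addnn -mul2n.
have := cardsD1 y S; rewrite yS; lia.
Qed.

Lemma card_bigcup_le (I T : finType) (P : pred I) (A : I -> {set T}) :
  #|\bigcup_(i | P i) A i| <= \sum_(i | P i) #|A i|.
Proof.
elim/big_rec2: _ => [|i U k _ le_Uk]; first by rewrite cards0.
exact: leq_trans (leq_of_leqif (leq_card_setU _ _)) (leq_add (leqnn _) le_Uk).
Qed.

Lemma sum_card_rel (V : finType) (r : rel V) :
  \sum_u #|[set v | r u v]| = #|arcs r|.
Proof.
rewrite /arcs -sum1dep_card.
under eq_bigr do rewrite -sum1dep_card.
by rewrite pair_big_dep.
Qed.

Lemma forest_partition_arcs_le (V : finType) (e r : rel V) (a : nat) (S : {set V}) :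
  irreflexive e -> forest_partition e a -> symmetric r -> subrel r e ->
  (forall x y, r x y -> x \in S) -> #|arcs r| <= 2 * a * #|S|.
Proof.
move=> eirr [col [col_sym [col_lt col_acy]]] rsym r_e r_S.
pose r_ (c : 'I_a) := [rel x y | r x y && (col x y == c)].
have arcs_cover : arcs r \subset \bigcup_(c < a) arcs (r_ c).
  apply/subsetP => -[x y]; rewrite inE /= => rxy.
  apply/bigcupP; exists (Ordinal (col_lt x y (r_e x y rxy))) => //.
  by rewrite inE /= rxy /=.
have card_class c : #|arcs (r_ c)| <= 2 * #|S|.
  apply: card_arcs_forest => [x y | x | | x y /andP [/r_S //]] /=.
  - by rewrite rsym col_sym.
  - by rewrite (contraNF (@r_e x x)) ?eirr.
  - by apply: acyclic_subrel (col_acy c (ltn_ord c)) => x y /andP [/r_e -> ->].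
apply: leq_trans (subset_leq_card arcs_cover) _.
apply: leq_trans (card_bigcup_le _ _) _.
apply: (@leq_trans (\sum_(c < a) 2 * #|S|)); first exact: leq_sum.
by rewrite sum_nat_const card_ord mulnCA mulnA.
Qed.

Lemma card_above_twice_mean (T : finType) (f : T -> nat) (n : nat) :
  2 * #|[set u | 2 * \sum_v f v < f u * n]| <= n.
Proof.
set s := \sum_v f v; set W := [set u | _].
have sum_W : #|W| * (2 * s).+1 <= s * n.
  rewrite -sum_nat_const; apply: leq_trans (_ : \sum_(u in W) f u * n <= _).
    by apply: leq_sum => u; rewrite inE.
  rewrite -big_distrl leq_mul2r big_mkcond leq_sum ?orbT // => u _.
  by case: (u \in W).
nia.
Qed.

Section Procedure.
Variables (V : finType) (e : rel V) (id : V -> nat).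
Hypotheses (esym : symmetric e) (eirr : irreflexive e) (id_inj : injective id).
Implicit Types (D : {set V * V}) (u v : V).

Definition unsettled D := [set u | 0 < rdeg e D u].
Definition total_rdeg D := \sum_u rdeg e D u.
Definition outarcs D u := [set v | (u, v) \in D].

Lemma avg_degE D : avg_deg e D = ((total_rdeg D)%:R / #|unsettled D|%:R)%R.
Proof. by []. Qed.

Lemma undirectedC D u v : undirected e D u v = undirected e D v u.
Proof. by rewrite /undirected esym [((u, v) \notin D) && _]andbC. Qed.

Lemma outarcs0 u : outarcs set0 u = set0.
Proof. by apply/setP => v; rewrite !inE. Qed.

Lemma card_unsettled_gt0 D u : 0 < rdeg e D u -> 0 < #|unsettled D|.
Proof. by move=> rdeg_gt0; rewrite card_gt0; apply/set0Pn; exists u; rewrite inE. Qed.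

Lemma undirected_unsettled D u v : undirected e D u v -> u \in unsettled D.
Proof. by move=> uv; rewrite inE card_gt0; apply/set0Pn; exists v; rewrite inE. Qed.

Lemma total_rdeg_le a D :
  forest_partition e a -> total_rdeg D <= 2 * a * #|unsettled D|.
Proof.
move=> part; rewrite /total_rdeg /rdeg sum_card_rel.
apply: forest_partition_arcs_le part _ _ (@undirected_unsettled D) => //.
- exact: undirectedC.
- by move=> u v /and3P [].
Qed.

Lemma waiting_rdeg_gt0 D u : is_waiting e D u -> 0 < rdeg e D u.
Proof.
rewrite -(ltr0n rat); apply: le_lt_trans.
by rewrite avg_degE mulr_ge0 ?divr_ge0.
Qed.

Lemma active_rdeg_mul_le D u :
  is_active e D u -> rdeg e D u * #|unsettled D| <= 2 * total_rdeg D.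
Proof.
case/andP => /card_unsettled_gt0 N_gt0.
by rewrite avg_degE mulrA ler_pdivlMr ?ltr0n // -!natrM ler_nat.
Qed.

Lemma waiting_rdeg_mul_gt D u :
  is_waiting e D u -> 2 * total_rdeg D < rdeg e D u * #|unsettled D|.
Proof.
move=> wait; have N_gt0 := card_unsettled_gt0 (waiting_rdeg_gt0 wait).
move: wait; rewrite /is_waiting avg_degE mulrA ltr_pdivrMr ?ltr0n //.
by rewrite -!natrM ltr_nat.
Qed.

Lemma active_rdeg_le a D u :
  forest_partition e a -> is_active e D u -> rdeg e D u <= 4 * a.
Proof.
move=> part act; have N_gt0 := card_unsettled_gt0 (proj1 (andP act)).
rewrite -(leq_pmul2r N_gt0); apply: leq_trans (active_rdeg_mul_le act) _.
by apply: leq_trans (leq_mul (leqnn 2) (total_rdeg_le D part)) _; rewrite !mulnA.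
Qed.

Lemma card_waiting D : 2 * #|[set u | is_waiting e D u]| <= #|unsettled D|.
Proof.
apply: leq_trans (card_above_twice_mean (rdeg e D) #|unsettled D|).
rewrite leq_mul2l subset_leq_card ?orbT //.
by apply/subsetP => u; rewrite !inE => /waiting_rdeg_mul_gt.
Qed.

Lemma undirected_phase D u v :
  undirected e (phase e id D) u v -> undirected e D u v.
Proof.
by rewrite /undirected !inE !negb_or => /and3P [-> /andP [-> _] /andP [-> _]].
Qed.

Lemma rdeg_phase D u : rdeg e (phase e id D) u <= rdeg e D u.
Proof.
by apply/subset_leq_card/subsetP => v; rewrite !inE; apply: undirected_phase.
Qed.

Lemma active_rdeg_phase D u : is_active e D u -> rdeg e (phase e id D) u = 0.
Proof.
move=> act_u; apply/eqP; rewrite cards_eq0; apply/eqP/setP => v; rewrite !inE.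
apply/negP => und'; have und := undirected_phase und'.
have v_uns : v \in unsettled D.
  by apply: (@undirected_unsettled D v u); rewrite undirectedC.
(* The surviving edge was not directed although [u] is active, so [v] is
   active as well and neither identifier is smaller than the other. *)
move: und'; rewrite /undirected /phase !inE !negb_or /= und.
rewrite [undirected _ _ v u]undirectedC und act_u /=.
case/and3P => euv /andP [_ /norP [not_wait not_lt]] /andP [_ /norP [_ not_gt]].
have act_v : is_active e D v.
  by move: v_uns not_wait; rewrite inE /is_active /is_waiting ltNge => -> /negbNE.
rewrite act_v /= in not_lt not_gt.
have uv : u != v by apply: contraTneq euv => ->; rewrite eirr.
by case: ltngtP not_lt not_gt => // /id_inj eq_uv; rewrite eq_uv eqxx in uv.
Qed.

Lemma unsettled_phase D : unsettled (phase e id D) \subset [set u | is_waiting e D u].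
Proof.
apply/subsetP => u; rewrite !inE => rdeg'_gt0.
have rdeg_gt0 := leq_trans rdeg'_gt0 (rdeg_phase D u).
have not_act : ~~ is_active e D u by apply: contraTN rdeg'_gt0 => /active_rdeg_phase ->.
by move: not_act; rewrite /is_active rdeg_gt0 /is_waiting ltNge.
Qed.

Lemma card_unsettled_phase D : 2 * #|unsettled (phase e id D)| <= #|unsettled D|.
Proof.
rewrite (leq_trans _ (card_waiting D)) // leq_mul2l.
by rewrite subset_leq_card ?unsettled_phase ?orbT.
Qed.

Lemma card_unsettled_after k : 2 ^ k * #|unsettled (after e id k)| <= #|V|.
Proof.
elim: k => [|k IH]; first by rewrite mul1n max_card.
apply: leq_trans IH; rewrite expnSr -mulnA leq_mul2l.
by rewrite (card_unsettled_phase (after e id k)) orbT.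
Qed.

Lemma unsettled_after_log : unsettled (after e id (trunc_log 2 #|V|).+1) = set0.
Proof.
have pow_gt0 : 0 < 2 ^ (trunc_log 2 #|V|).+1 by rewrite expn_gt0.
apply/eqP; rewrite -cards_eq0 -leqn0 -ltnS -(ltn_pmul2l pow_gt0) muln1.
exact: leq_ltn_trans (card_unsettled_after _) (trunc_log_ltn _ (isT : 1 < 2)).
Qed.

Lemma unsettled0_directed D u v :
  unsettled D = set0 -> e u v -> ((u, v) \in D) || ((v, u) \in D).
Proof.
move=> uns0 euv; apply: contraT; rewrite negb_or => /andP [uv_new vu_new].
have /undirected_unsettled : undirected e D u v.
  by rewrite /undirected euv uv_new vu_new.
by rewrite uns0 inE.
Qed.

Lemma outarcs_phase D u :
  outarcs (phase e id D) u \subset outarcs D u :|: [set v | undirected e D u v].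
Proof.
by apply/subsetP => v; rewrite !inE => /orP [-> | /andP [-> _]]; rewrite ?orbT.
Qed.

Lemma outarcs_phase_inactive D u :
  ~~ is_active e D u -> outarcs (phase e id D) u = outarcs D u.
Proof.
move=> not_act; apply/setP => v; rewrite !inE.
by case: ((u, v) \in D) => //=; rewrite (negbTE not_act) /= andbF.
Qed.

Lemma outarcs_after_unsettled k u :
  u \in unsettled (after e id k) -> outarcs (after e id k) u = set0.
Proof.
elim: k => [|k IH] u_uns; first exact: outarcs0.
rewrite /= outarcs_phase_inactive; last first.
  by apply: contraTN u_uns => /active_rdeg_phase; rewrite inE => ->.
apply: IH; move: u_uns; rewrite !inE => /leq_trans; apply; exact: rdeg_phase.
Qed.

Lemma card_outarcs_after a k u :
  forest_partition e a -> #|outarcs (after e id k) u| <= 4 * a.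
Proof.
move=> part; elim: k => [|k IH]; first by rewrite /= outarcs0 cards0.
have [act | not_act] := boolP (is_active e (after e id k) u).
  2: by rewrite /= outarcs_phase_inactive.
have u_uns : u \in unsettled (after e id k) by rewrite inE; case/andP: act.
apply: leq_trans (subset_leq_card (outarcs_phase _ u)) _.
rewrite outarcs_after_unsettled // set0U; exact: active_rdeg_le part act.
Qed.

End Procedure.

Theorem lemma4p1 :
  exists C : nat,
  forall (V : finType) (e : rel V) (id : V -> nat) (a : nat),
    symmetric e -> irreflexive e -> injective id -> is_arboricity e a ->
    exists i : nat,
      i <= C * (trunc_log 2 #|V|).+1 /\
      (forall u v, e u v -> ((u, v) \in after e id i) || ((v, u) \in after e id i)) /\
      (forall u : V, #|[set v | (u, v) \in after e id i]| <= C * a).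
Proof.
exists 4 => V e id a esym eirr id_inj [part _].
exists (trunc_log 2 #|V|).+1; split; first by rewrite leq_pmull.
split => [u v | u]; last exact: card_outarcs_after.
exact: unsettled0_directed (unsettled_after_log esym eirr id_inj).
Qed.
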